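(* Let $r$ be a positive integer and $s$ a non-negative integer, with $r\notin\{2,6\}$. Then a solution to $(4,3)$-HWP$(24;r,s)$ exists if and only if $r+s=11$.
   Context: $K_{24}-I$ denotes the complete graph on $24$ vertices with the edges of a perfect matching $I$ removed. A $C_k$-factor of a graph is a spanning subgraph each of whose components is a cycle of length $k$. A solution to $(4,3)$-HWP$(24;r,s)$ is a partition of the edge set of $K_{24}-I$, for some perfect matching $I$, into $r$ $C_4$-factors and $s$ $C_3$-factors. *)

From mathcomp Require Import all_boot.
Set Implicit Arguments. Unset Strict Implicit. Unset Printing Implicit Defensive.

(* Vertices of K_24. An (undirected) edge is a 2-element vertex set;
   a graph (spanning subgraph) is given by its edge set. *)
Definition vert := 'I_24.
Definition graph := {set {set vert}}.

Definition cycle_edges (c : seq vert) : graph :=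
  [set [set nth ord0 c i; nth ord0 c (i.+1 %% size c)] | i : 'I_(size c)].

Definition Ck_factor (k : nat) (H : graph) : Prop :=
  exists cs : seq (seq vert),
    [/\ all (fun c => (size c == k) && uniq c) cs,
        uniq (flatten cs),
        (forall v : vert, v \in flatten cs) &
        H = \bigcup_(c <- cs) cycle_edges c].

Definition perfect_matching (I : graph) : Prop :=
  (forall e, e \in I -> #|e| = 2) /\
  (forall v : vert, #|[set e in I | v \in e]| = 1).

Definition K24_minus (I : graph) : graph :=
  [set e : {set vert} | (#|e| == 2) && (e \notin I)].

Definition HWP43_24 (r s : nat) : Prop :=
  exists I : graph, perfect_matching I /\
  exists P : 'I_(r + s) -> graph,
    [/\ forall i : 'I_(r + s), i < r -> Ck_factor 4 (P i),
        forall i : 'I_(r + s), r <= i -> Ck_factor 3 (P i),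
        forall i j : 'I_(r + s), i != j -> [disjoint P i & P j] &
        \bigcup_(i < r + s) P i = K24_minus I].

From mathcomp Require Import all_boot zify.
Set Implicit Arguments. Unset Strict Implicit. Unset Printing Implicit Defensive.

(* A C_k-factor of K_24 with k >= 3 has exactly 24 edges, while K_24 - I has
   'C(24, 2) - 12 = 264 edges, so a solution needs r + s = 264 / 24 = 11
   factors.  Conversely, for each admissible r an explicit decomposition of
   K_24 minus the matching {x, x + 12} is verified by computation. *)

Lemma eq_set2 (T : finType) (x y x' y' : T) :
  [set x; y] = [set x'; y'] -> (x = x' /\ y = y') \/ (x = y' /\ y = x').
Proof.
move=> E.
have /set2P x_in : x \in [set x'; y'] by rewrite -E set21.
have /set2P y_in : y \in [set x'; y'] by rewrite -E set22.
have /set2P x'_in : x' \in [set x; y] by rewrite E set21.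
have /set2P y'_in : y' \in [set x; y] by rewrite E set22.
by case: x_in y_in x'_in y'_in => [] ? [] ? [] ? [] ?;
  first [left; split; congruence | right; split; congruence].
Qed.

Lemma card_bigcup_disjoint (T I : finType) (P : I -> {set T}) :
  (forall i j, i != j -> [disjoint P i & P j]) -> #|\bigcup_i P i| = \sum_i #|P i|.
Proof.
move=> P_disj; rewrite -sum1_card (partition_disjoint_bigcup _ _ P_disj).
by apply: eq_bigr => i _; rewrite sum1_card.
Qed.

Lemma sum_card_incidence (T : finType) (A : {set {set T}}) :
  \sum_(e in A) #|e| = \sum_(v : T) #|[set e in A | v \in e]|.
Proof.
transitivity (\sum_(e in A) \sum_(v : T) (v \in e)).
  by apply: eq_bigr => e _; rewrite -sum1_card big_mkcond.
rewrite exchange_big; apply: eq_bigr => v _.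
rewrite -sum1_card big_mkcond [RHS]big_mkcond /=.
by apply: eq_bigr => e _; rewrite !inE; case: (e \in A).
Qed.

Lemma card_nth_count (T : Type) (x0 : T) (s : seq T) n (p : pred T) :
  size s = n -> #|[set i : 'I_n | p (nth x0 s i)]| = count p s.
Proof.
move=> <-; rewrite -sum1_card (eq_bigl (fun i : 'I__ => p (nth x0 s i))) => [|i].
  2: by rewrite inE.
rewrite -(big_mkord (fun i => p (nth x0 s i)) (fun=> 1)) sum1_count -count_map.
by rewrite /index_iota subn0 -/(mkseq _ _) mkseq_nth.
Qed.

Lemma exact_cover_of_card (T : finType) n (P : 'I_n -> {set T}) (K S : {set T}) :
  (forall i, P i \subset S) -> K \subset S ->
  {in S, forall e, #|[set i | e \in P i]| = (e \in K)} ->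
  (forall i j, i != j -> [disjoint P i & P j]) /\ \bigcup_i P i = K.
Proof.
move=> P_S /subsetP K_S multP; split=> [i j ij|].
  apply/pred0P=> e /=; apply/negbTE/andP=> -[e_i e_j].
  have : #|[set i; j]| <= #|[set k | e \in P k]|.
    by apply/subset_leq_card/subsetP=> k /set2P[]->; rewrite inE.
  by rewrite cards2 ij multP ?(subsetP (P_S i)) //; case: (e \in K).
apply/setP=> e; apply/bigcupP/idP=> [[i _ e_i]|e_K].
  rewrite -[e \in K]lt0b -(multP e) ?(subsetP (P_S i)) // card_gt0; apply/set0Pn.
  by exists i; rewrite inE.
have : 0 < #|[set i | e \in P i]| by rewrite multP ?K_S ?e_K.
by rewrite card_gt0 => /set0Pn[i]; rewrite inE; exists i.
Qed.

Implicit Types (c : seq vert) (cs : seq (seq vert)) (x y : vert) (e : {set vert}).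

Lemma cycle_edges_sub c e x : e \in cycle_edges c -> x \in e -> x \in c.
Proof.
case/imsetP=> i _ -> /set2P[]->; apply: mem_nth => //.
by rewrite ltn_pmod // (leq_ltn_trans (leq0n i)).
Qed.

Lemma card_cycle_edges c : uniq c -> 2 < size c -> #|cycle_edges c| = size c.
Proof.
move=> c_uniq c_gt2; rewrite card_imset ?card_ord // => i j.
have c_gt0 : 0 < size c by rewrite (leq_trans _ c_gt2).
have succ_lt (h : 'I_(size c)) : h.+1 %% size c < size c by rewrite ltn_pmod.
case/eq_set2=> [[/eqP + _]|[/eqP + /eqP +]].
  by rewrite nth_uniq // => /eqP/val_inj.
rewrite !nth_uniq // => /eqP i_succ_j /eqP succ_i_j; exfalso.
have : i + 0 == i + 2 %[mod size c].
  rewrite addn0 [in X in X == _]i_succ_j -succ_i_j modn_mod.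
  by rewrite -(addn1 (_ %% _)) modnDml addn1 addn2.
by rewrite eqn_modDl mod0n modn_small.
Qed.

Definition factor_graph cs : graph := \bigcup_(c <- cs) cycle_edges c.

Lemma factor_graphP cs e :
  reflect (exists2 c, c \in cs & e \in cycle_edges c) (e \in factor_graph cs).
Proof.
rewrite /factor_graph; elim: cs => [|c cs IHcs]; first by rewrite big_nil inE; right=> -[].
rewrite big_cons inE; apply: (iffP orP) => [[e_c|/IHcs[c' c'_cs e_c']]|[c']].
- by exists c; rewrite ?mem_head.
- by exists c'; rewrite // in_cons c'_cs orbT.
- by rewrite in_cons => /orP[/eqP->|c'_cs e_c']; [left | right; apply/IHcs; exists c'].
Qed.

Lemma card_factor_graph cs :
  all (fun c => (2 < size c) && uniq c) cs -> uniq (flatten cs) ->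
  #|factor_graph cs| = size (flatten cs).
Proof.
rewrite /factor_graph; elim: cs => [|c cs IHcs] /=; first by rewrite big_nil cards0.
case/andP=> /andP[c_gt2 c_uniq] cs_ok; rewrite cat_uniq => /and3P[_ c_cs_disj cs_uniq].
rewrite big_cons cardsU card_cycle_edges // IHcs // size_cat.
suff /eqP-> : cycle_edges c :&: \bigcup_(c <- cs) cycle_edges c == set0 by rewrite cards0 subn0.
rewrite setI_eq0; apply/pred0P=> e /=; apply/negbTE/andP=> -[e_c /factor_graphP[c' c'_cs e_c']].
case/imsetP: (e_c) => i _ e_def; pose x := nth ord0 c i.
have x_e : x \in e by rewrite e_def set21.
case/hasP: c_cs_disj; exists x; last exact: cycle_edges_sub e_c x_e.
by apply/flattenP; exists c'; last exact: cycle_edges_sub e_c' x_e.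
Qed.

Definition cycle_step (c : seq vert) (x y : vert) : bool :=
  has (fun i => (nth ord0 c i == x) && (nth ord0 c (i.+1 %% size c) == y)) (iota 0 (size c)).

Lemma cycle_stepP c x y :
  reflect (exists i : 'I_(size c), nth ord0 c i = x /\ nth ord0 c (i.+1 %% size c) = y)
          (cycle_step c x y).
Proof.
apply: (iffP hasP) => [[i]|[i [<- <-]]].
  by rewrite mem_iota => /andP[_ i_lt] /andP[/eqP <- /eqP <-]; exists (Ordinal i_lt).
by exists (val i); rewrite ?mem_iota ?ltn_ord ?eqxx.
Qed.

Lemma mem_cycle_edges c x y :
  ([set x; y] \in cycle_edges c) = cycle_step c x y || cycle_step c y x.
Proof.
apply/imsetP/orP=> [[i _ /eq_set2[[-> ->]|[-> ->]]]|[]/cycle_stepP[i [<- <-]]].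
- by left; apply/cycle_stepP; exists i.
- by right; apply/cycle_stepP; exists i.
- by exists i.
- by exists i; rewrite // setUC.
Qed.

Lemma mem_factor_graph cs x y :
  ([set x; y] \in factor_graph cs) = has (fun c => cycle_step c x y || cycle_step c y x) cs.
Proof.
apply/factor_graphP/hasP=> -[c c_cs c_xy]; exists c => //.
  by rewrite -mem_cycle_edges.
by rewrite mem_cycle_edges.
Qed.

Lemma card_Ck_factor k H : 2 < k -> Ck_factor k H -> #|H| = 24.
Proof.
move=> k_gt2 [cs [cs_ok cs_uniq cs_cover ->]].
rewrite card_factor_graph //; last first.
  by apply: sub_all cs_ok => c /andP[/eqP-> ->]; rewrite k_gt2.
by rewrite -(card_uniqP cs_uniq) eq_cardT // size_enum_ord.
Qed.

Lemma card_perfect_matching I : perfect_matching I -> #|I| = 12.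
Proof.
case=> I_edge I_deg; have := sum_card_incidence I.
rewrite (eq_bigr _ I_edge) (eq_bigr _ (fun v _ => I_deg v)) sum_nat_const sum1_card card_ord.
lia.
Qed.

Lemma card_K24_minus I : perfect_matching I -> #|K24_minus I| = 264.
Proof.
move=> I_match; have [I_edge _] := I_match.
have -> : K24_minus I = [set e : {set vert} | #|e| == 2] :\: I.
  by apply/setP=> e; rewrite !inE andbC.
rewrite cardsDS ?card_draws ?card_ord ?card_perfect_matching //.
by apply/subsetP=> e /I_edge; rewrite inE => ->.
Qed.

Lemma HWP43_24_sum r s : HWP43_24 r s -> r + s = 11.
Proof.
case=> I [I_match [P [P4 P3 P_disj P_cover]]].
have card_P i : #|P i| = 24.
  by case: (ltnP i r) => [/P4|/P3]; apply: card_Ck_factor.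
have := card_bigcup_disjoint P_disj.
rewrite P_cover card_K24_minus // (eq_bigr (fun=> 24)) // sum_nat_const card_ord.
lia.
Qed.

(* Not [inord]: it goes through the opaque [idP] and would block [vm_compute]
   on the certificates.  For the same reason [cycle_step] and the checkers
   below quantify over lists rather than over finTypes. *)
Definition vertex (n : nat) : vert := Ordinal (ltn_pmod n (isT : 0 < 24)).

Definition vertices : seq vert := map vertex (iota 0 24).

Lemma mem_vertices x : x \in vertices.
Proof.
apply/mapP; exists (val x); first by rewrite mem_iota ltn_ord.
by apply: val_inj; rewrite /= modn_small.
Qed.

Definition antipode (x : vert) : vert := vertex (x + 12).

Lemma antipodeK : involutive antipode.
Proof. by move=> x; apply: val_inj => /=; have := ltn_ord x; lia. Qed.

Lemma antipode_neq x : antipode x != x.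
Proof. by apply/eqP=> /(congr1 val) /=; have := ltn_ord x; lia. Qed.

Definition antipodal_matching : graph := [set [set x; antipode x] | x : vert].

Lemma perfect_matching_antipodal : perfect_matching antipodal_matching.
Proof.
split=> [e /imsetP[x _ ->]|v]; first by rewrite cards2 eq_sym antipode_neq.
suff -> : [set e in antipodal_matching | v \in e] = [set [set v; antipode v]] by rewrite cards1.
apply/setP=> e; rewrite !inE; apply/andP/eqP=> [[/imsetP[x _ ->] /set2P[]->]|->].
- by [].
- by rewrite antipodeK setUC.
- by split; [apply/imsetP; exists v | rewrite set21].
Qed.

Lemma mem_K24_minus_antipodal x y :
  ([set x; y] \in K24_minus antipodal_matching) = (x != y) && (y != antipode x).
Proof.
rewrite inE cards2; congr (_ && ~~ _); first by case: (x != y).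
apply/imsetP/eqP=> [[z _ /eq_set2[[-> ->]|[-> ->]]]|->]; rewrite ?antipodeK //.
by exists x.
Qed.

Definition Ck_factorb k (cs : seq (seq vert)) : bool :=
  [&& all (fun c => (size c == k) && uniq c) cs, uniq (flatten cs) &
      all (mem (flatten cs)) vertices].

Lemma Ck_factor_graph k cs : Ck_factorb k cs -> Ck_factor k (factor_graph cs).
Proof.
case/and3P=> cs_ok cs_uniq /allP cs_cover; exists cs; split=> // v.
exact/cs_cover/mem_vertices.
Qed.

Definition edge_count (F : seq (seq (seq vert))) (x y : vert) : nat :=
  count (has (fun c => cycle_step c x y || cycle_step c y x)) F.

Definition HWP43_24_certb r (F : seq (seq (seq vert))) : bool :=
  [&& r <= size F, all (Ck_factorb 4) (take r F), all (Ck_factorb 3) (drop r F) &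
      all (fun x => all (fun y => edge_count F x y == (x != y) && (y != antipode x)) vertices)
          vertices].

Lemma HWP43_24_of_certb r F : HWP43_24_certb r F -> HWP43_24 r (size F - r).
Proof.
case/and4P=> r_le C4_ok C3_ok /allP count_ok.
set s := size F - r; have size_F : size F = r + s by rewrite subnKC.
pose P (i : 'I_(r + s)) := factor_graph (nth [::] F i).
have [P_disj P_cover] : (forall i j, i != j -> [disjoint P i & P j]) /\
                        \bigcup_i P i = K24_minus antipodal_matching.
  apply: (@exact_cover_of_card _ _ _ _ [set [set x; y] | x : vert, y : vert]).
  - move=> i; apply/subsetP=> e /factor_graphP[c _ /imsetP[j _ ->]].
    by apply/imset2P; exists (nth ord0 c j) (nth ord0 c (j.+1 %% size c)).
  - apply/subsetP=> e; rewrite inE => /andP[/cards2P[x [y [_ ->]]] _].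
    by apply/imset2P; exists x y.
  move=> _ /imset2P[x y _ _ ->].
  rewrite (card_nth_count _ (fun cs => [set x; y] \in factor_graph cs) size_F).
  rewrite (eq_count (fun cs => mem_factor_graph cs x y)) mem_K24_minus_antipodal.
  by apply/eqP; have /allP := count_ok x (mem_vertices x); apply; apply: mem_vertices.
exists antipodal_matching; split; first exact: perfect_matching_antipodal.
exists P; split=> // i i_r; apply: Ck_factor_graph.
  apply: (allP C4_ok); rewrite -(nth_take [::] i_r) mem_nth // size_takel //.
apply: (allP C3_ok); rewrite -(subnKC i_r) -nth_drop mem_nth // size_drop size_F.
by have := ltn_ord i; lia.
Qed.

(* Factor by factor, the cycles of a solution of (4,3)-HWP(24; r, 11 - r):
   first r C_4-factors, then the C_3-factors, on the vertices 0, ..., 23 with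
   the matching {x, x + 12} removed. *)
Definition certificate (r : nat) : seq (seq (seq nat)) :=
  match r with
  | 1 =>
    [:: [:: [:: 0; 6; 12; 18]; [:: 1; 7; 13; 19]; [:: 2; 8; 14; 20]; [:: 3; 9; 15; 21]; [:: 4; 10; 16; 22]; [:: 5; 11; 17; 23]];
     [:: [:: 0; 5; 1]; [:: 2; 22; 21]; [:: 3; 4; 8]; [:: 6; 11; 7]; [:: 9; 14; 10]; [:: 12; 13; 17]; [:: 15; 20; 16]; [:: 18; 23; 19]];
     [:: [:: 0; 20; 19]; [:: 1; 6; 2]; [:: 3; 22; 23]; [:: 4; 9; 5]; [:: 7; 12; 8]; [:: 10; 15; 11]; [:: 13; 14; 18]; [:: 16; 21; 17]];
     [:: [:: 0; 23; 4]; [:: 1; 21; 20]; [:: 2; 7; 3]; [:: 5; 10; 6]; [:: 8; 9; 13]; [:: 11; 16; 12]; [:: 14; 19; 15]; [:: 17; 18; 22]];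
     [:: [:: 0; 2; 15]; [:: 1; 11; 4]; [:: 3; 12; 14]; [:: 5; 19; 22]; [:: 6; 21; 8]; [:: 7; 17; 10]; [:: 9; 20; 18]; [:: 13; 23; 16]];
     [:: [:: 0; 14; 17]; [:: 1; 3; 16]; [:: 2; 5; 12]; [:: 4; 15; 13]; [:: 6; 20; 23]; [:: 7; 22; 9]; [:: 8; 18; 11]; [:: 10; 21; 19]];
     [:: [:: 0; 7; 21]; [:: 1; 18; 15]; [:: 2; 17; 4]; [:: 3; 13; 6]; [:: 5; 16; 14]; [:: 8; 23; 10]; [:: 9; 19; 12]; [:: 11; 20; 22]];
     [:: [:: 0; 11; 9]; [:: 1; 8; 22]; [:: 2; 16; 19]; [:: 3; 18; 5]; [:: 4; 14; 7]; [:: 6; 15; 17]; [:: 10; 20; 13]; [:: 12; 21; 23]];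
     [:: [:: 0; 13; 22]; [:: 1; 12; 10]; [:: 2; 23; 9]; [:: 3; 17; 20]; [:: 4; 6; 19]; [:: 5; 15; 8]; [:: 7; 16; 18]; [:: 11; 14; 21]];
     [:: [:: 0; 10; 3]; [:: 1; 14; 23]; [:: 2; 11; 13]; [:: 4; 21; 18]; [:: 5; 7; 20]; [:: 6; 16; 9]; [:: 8; 17; 19]; [:: 12; 22; 15]];
     [:: [:: 0; 8; 16]; [:: 1; 9; 17]; [:: 2; 10; 18]; [:: 3; 19; 11]; [:: 4; 12; 20]; [:: 5; 13; 21]; [:: 6; 14; 22]; [:: 7; 23; 15]]]
  | 3 =>
    [:: [:: [:: 0; 11; 12; 23]; [:: 1; 14; 16; 3]; [:: 2; 4; 15; 13]; [:: 5; 6; 17; 18]; [:: 7; 20; 22; 9]; [:: 8; 10; 21; 19]];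
     [:: [:: 0; 13; 11; 22]; [:: 1; 12; 10; 23]; [:: 2; 3; 14; 15]; [:: 4; 6; 19; 17]; [:: 5; 7; 18; 16]; [:: 8; 9; 20; 21]];
     [:: [:: 0; 6; 12; 18]; [:: 1; 7; 13; 19]; [:: 2; 8; 14; 20]; [:: 3; 9; 15; 21]; [:: 4; 10; 16; 22]; [:: 5; 11; 17; 23]];
     [:: [:: 0; 1; 2]; [:: 3; 4; 5]; [:: 6; 7; 8]; [:: 9; 10; 11]; [:: 12; 13; 14]; [:: 15; 16; 17]; [:: 18; 20; 19]; [:: 21; 22; 23]];
     [:: [:: 0; 10; 3]; [:: 1; 5; 20]; [:: 2; 11; 7]; [:: 4; 21; 18]; [:: 6; 16; 9]; [:: 8; 17; 13]; [:: 12; 22; 15]; [:: 14; 19; 23]];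
     [:: [:: 0; 20; 15]; [:: 1; 11; 4]; [:: 2; 6; 21]; [:: 3; 12; 8]; [:: 5; 19; 22]; [:: 7; 17; 10]; [:: 9; 14; 18]; [:: 13; 23; 16]];
     [:: [:: 0; 14; 17]; [:: 1; 21; 16]; [:: 2; 5; 12]; [:: 3; 7; 22]; [:: 4; 9; 13]; [:: 6; 20; 23]; [:: 8; 18; 11]; [:: 10; 15; 19]];
     [:: [:: 0; 7; 21]; [:: 1; 18; 15]; [:: 2; 17; 22]; [:: 3; 13; 6]; [:: 4; 8; 23]; [:: 5; 10; 14]; [:: 9; 19; 12]; [:: 11; 20; 16]];
     [:: [:: 0; 5; 9]; [:: 1; 8; 22]; [:: 2; 16; 19]; [:: 3; 18; 23]; [:: 4; 14; 7]; [:: 6; 15; 11]; [:: 10; 20; 13]; [:: 12; 21; 17]];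
     [:: [:: 0; 4; 19]; [:: 1; 6; 10]; [:: 2; 23; 9]; [:: 3; 17; 20]; [:: 5; 15; 8]; [:: 7; 16; 12]; [:: 11; 14; 21]; [:: 13; 22; 18]];
     [:: [:: 0; 8; 16]; [:: 1; 9; 17]; [:: 2; 10; 18]; [:: 3; 19; 11]; [:: 4; 12; 20]; [:: 5; 13; 21]; [:: 6; 14; 22]; [:: 7; 23; 15]]]
  | 4 =>
    [:: [:: [:: 0; 2; 17; 3]; [:: 1; 11; 8; 10]; [:: 4; 6; 21; 7]; [:: 5; 15; 12; 14]; [:: 9; 19; 16; 18]; [:: 13; 23; 20; 22]];
     [:: [:: 0; 14; 23; 21]; [:: 1; 3; 18; 4]; [:: 2; 11; 9; 12]; [:: 5; 7; 22; 8]; [:: 6; 15; 13; 16]; [:: 10; 20; 17; 19]];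
     [:: [:: 0; 22; 1; 15]; [:: 2; 5; 19; 4]; [:: 3; 13; 10; 12]; [:: 6; 8; 23; 9]; [:: 7; 17; 14; 16]; [:: 11; 20; 18; 21]];
     [:: [:: 0; 10; 7; 9]; [:: 1; 23; 2; 16]; [:: 3; 6; 20; 5]; [:: 4; 14; 11; 13]; [:: 8; 18; 15; 17]; [:: 12; 22; 19; 21]];
     [:: [:: 0; 5; 1]; [:: 2; 22; 21]; [:: 3; 4; 8]; [:: 6; 11; 7]; [:: 9; 14; 10]; [:: 12; 13; 17]; [:: 15; 20; 16]; [:: 18; 23; 19]];
     [:: [:: 0; 20; 19]; [:: 1; 6; 2]; [:: 3; 22; 23]; [:: 4; 9; 5]; [:: 7; 12; 8]; [:: 10; 15; 11]; [:: 13; 14; 18]; [:: 16; 21; 17]];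
     [:: [:: 0; 23; 4]; [:: 1; 21; 20]; [:: 2; 7; 3]; [:: 5; 10; 6]; [:: 8; 9; 13]; [:: 11; 16; 12]; [:: 14; 19; 15]; [:: 17; 18; 22]];
     [:: [:: 0; 17; 6]; [:: 1; 8; 14]; [:: 2; 20; 13]; [:: 3; 19; 11]; [:: 4; 21; 10]; [:: 5; 12; 18]; [:: 7; 23; 15]; [:: 9; 16; 22]];
     [:: [:: 0; 8; 16]; [:: 1; 18; 7]; [:: 2; 9; 15]; [:: 3; 21; 14]; [:: 4; 12; 20]; [:: 5; 22; 11]; [:: 6; 13; 19]; [:: 10; 17; 23]];
     [:: [:: 0; 11; 18]; [:: 1; 9; 17]; [:: 2; 8; 19]; [:: 3; 10; 16]; [:: 4; 15; 22]; [:: 5; 13; 21]; [:: 6; 12; 23]; [:: 7; 20; 14]];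
     [:: [:: 0; 7; 13]; [:: 1; 12; 19]; [:: 2; 10; 18]; [:: 3; 9; 20]; [:: 4; 11; 17]; [:: 5; 16; 23]; [:: 6; 14; 22]; [:: 8; 15; 21]]]
  | 5 =>
    [:: [:: [:: 0; 3; 12; 15]; [:: 1; 10; 13; 22]; [:: 2; 5; 14; 17]; [:: 4; 7; 16; 19]; [:: 6; 21; 18; 9]; [:: 8; 11; 20; 23]];
     [:: [:: 0; 9; 12; 21]; [:: 1; 16; 13; 4]; [:: 2; 11; 14; 23]; [:: 3; 6; 15; 18]; [:: 5; 8; 17; 20]; [:: 7; 10; 19; 22]];
     [:: [:: 0; 4; 12; 16]; [:: 1; 9; 13; 21]; [:: 2; 8; 14; 20]; [:: 3; 7; 15; 19]; [:: 5; 11; 17; 23]; [:: 6; 10; 18; 22]];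
     [:: [:: 0; 6; 12; 18]; [:: 1; 5; 13; 17]; [:: 2; 10; 14; 22]; [:: 3; 9; 15; 21]; [:: 4; 8; 16; 20]; [:: 7; 23; 19; 11]];
     [:: [:: 0; 8; 12; 20]; [:: 1; 7; 13; 19]; [:: 2; 6; 14; 18]; [:: 3; 11; 15; 23]; [:: 4; 10; 16; 22]; [:: 5; 9; 17; 21]];
     [:: [:: 0; 11; 1]; [:: 2; 16; 15]; [:: 3; 4; 14]; [:: 5; 19; 18]; [:: 6; 17; 7]; [:: 8; 21; 22]; [:: 9; 20; 10]; [:: 12; 13; 23]];
     [:: [:: 0; 14; 13]; [:: 1; 12; 2]; [:: 3; 16; 17]; [:: 4; 15; 5]; [:: 6; 20; 19]; [:: 7; 18; 8]; [:: 9; 23; 22]; [:: 10; 21; 11]];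
     [:: [:: 0; 23; 10]; [:: 1; 15; 14]; [:: 2; 13; 3]; [:: 4; 18; 17]; [:: 5; 16; 6]; [:: 7; 20; 21]; [:: 8; 9; 19]; [:: 11; 22; 12]];
     [:: [:: 0; 2; 19]; [:: 1; 6; 8]; [:: 3; 22; 5]; [:: 4; 9; 11]; [:: 7; 12; 14]; [:: 10; 15; 17]; [:: 13; 20; 18]; [:: 16; 21; 23]];
     [:: [:: 0; 17; 22]; [:: 1; 3; 20]; [:: 2; 7; 9]; [:: 4; 6; 23]; [:: 5; 10; 12]; [:: 8; 15; 13]; [:: 11; 16; 18]; [:: 14; 19; 21]];
     [:: [:: 0; 5; 7]; [:: 1; 18; 23]; [:: 2; 4; 21]; [:: 3; 10; 8]; [:: 6; 11; 13]; [:: 9; 14; 16]; [:: 12; 19; 17]; [:: 15; 20; 22]]]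
  | 7 =>
    [:: [:: [:: 0; 2; 9; 5]; [:: 1; 4; 13; 16]; [:: 3; 23; 18; 20]; [:: 6; 11; 15; 8]; [:: 7; 10; 19; 22]; [:: 12; 14; 21; 17]];
     [:: [:: 0; 4; 21; 19]; [:: 1; 6; 10; 3]; [:: 2; 5; 14; 17]; [:: 7; 9; 16; 12]; [:: 8; 11; 20; 23]; [:: 13; 18; 22; 15]];
     [:: [:: 0; 9; 12; 21]; [:: 1; 5; 22; 20]; [:: 2; 4; 11; 7]; [:: 3; 6; 15; 18]; [:: 8; 10; 17; 13]; [:: 14; 16; 23; 19]];
     [:: [:: 0; 17; 15; 20]; [:: 1; 10; 13; 22]; [:: 2; 6; 23; 21]; [:: 3; 5; 12; 8]; [:: 4; 7; 16; 19]; [:: 9; 14; 18; 11]];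
     [:: [:: 0; 7; 3; 22]; [:: 1; 18; 16; 21]; [:: 2; 11; 14; 23]; [:: 4; 9; 13; 6]; [:: 5; 8; 17; 20]; [:: 10; 12; 19; 15]];
     [:: [:: 0; 3; 12; 15]; [:: 1; 8; 4; 23]; [:: 2; 19; 17; 22]; [:: 5; 7; 14; 10]; [:: 6; 21; 18; 9]; [:: 11; 16; 20; 13]];
     [:: [:: 0; 6; 12; 18]; [:: 1; 7; 13; 19]; [:: 2; 8; 14; 20]; [:: 3; 9; 15; 21]; [:: 4; 10; 16; 22]; [:: 5; 11; 17; 23]];
     [:: [:: 0; 11; 1]; [:: 2; 16; 15]; [:: 3; 4; 14]; [:: 5; 19; 18]; [:: 6; 17; 7]; [:: 8; 21; 22]; [:: 9; 20; 10]; [:: 12; 13; 23]];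
     [:: [:: 0; 14; 13]; [:: 1; 12; 2]; [:: 3; 16; 17]; [:: 4; 15; 5]; [:: 6; 20; 19]; [:: 7; 18; 8]; [:: 9; 23; 22]; [:: 10; 21; 11]];
     [:: [:: 0; 23; 10]; [:: 1; 15; 14]; [:: 2; 13; 3]; [:: 4; 18; 17]; [:: 5; 16; 6]; [:: 7; 20; 21]; [:: 8; 9; 19]; [:: 11; 22; 12]];
     [:: [:: 0; 8; 16]; [:: 1; 9; 17]; [:: 2; 10; 18]; [:: 3; 19; 11]; [:: 4; 12; 20]; [:: 5; 13; 21]; [:: 6; 14; 22]; [:: 7; 23; 15]]]
  | 8 =>
    [:: [:: [:: 0; 2; 22; 3]; [:: 1; 12; 21; 7]; [:: 4; 17; 23; 13]; [:: 5; 15; 9; 20]; [:: 6; 11; 8; 10]; [:: 14; 19; 16; 18]];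
     [:: [:: 0; 14; 5; 18]; [:: 1; 3; 23; 4]; [:: 2; 8; 22; 13]; [:: 6; 21; 10; 16]; [:: 7; 12; 9; 11]; [:: 15; 20; 17; 19]];
     [:: [:: 0; 5; 2; 4]; [:: 1; 15; 6; 19]; [:: 3; 9; 23; 14]; [:: 7; 17; 11; 22]; [:: 8; 12; 10; 13]; [:: 16; 20; 18; 21]];
     [:: [:: 0; 10; 4; 15]; [:: 1; 6; 3; 5]; [:: 2; 20; 7; 16]; [:: 8; 18; 12; 23]; [:: 9; 14; 11; 13]; [:: 17; 21; 19; 22]];
     [:: [:: 0; 13; 19; 9]; [:: 1; 11; 5; 16]; [:: 2; 7; 4; 6]; [:: 3; 21; 8; 17]; [:: 10; 15; 12; 14]; [:: 18; 23; 20; 22]];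
     [:: [:: 0; 19; 23; 21]; [:: 1; 14; 20; 10]; [:: 2; 17; 6; 12]; [:: 3; 7; 5; 8]; [:: 4; 18; 9; 22]; [:: 11; 16; 13; 15]];
     [:: [:: 0; 20; 1; 22]; [:: 2; 11; 21; 15]; [:: 3; 13; 7; 18]; [:: 4; 9; 6; 8]; [:: 5; 19; 10; 23]; [:: 12; 16; 14; 17]];
     [:: [:: 0; 11; 20; 6]; [:: 1; 21; 2; 23]; [:: 3; 16; 22; 12]; [:: 4; 14; 8; 19]; [:: 5; 10; 7; 9]; [:: 13; 17; 15; 18]];
     [:: [:: 0; 8; 1]; [:: 2; 19; 18]; [:: 3; 4; 11]; [:: 5; 22; 21]; [:: 6; 14; 7]; [:: 9; 17; 10]; [:: 12; 13; 20]; [:: 15; 23; 16]];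
     [:: [:: 0; 17; 16]; [:: 1; 9; 2]; [:: 3; 19; 20]; [:: 4; 12; 5]; [:: 6; 23; 22]; [:: 7; 15; 8]; [:: 10; 18; 11]; [:: 13; 14; 21]];
     [:: [:: 0; 23; 7]; [:: 1; 18; 17]; [:: 2; 10; 3]; [:: 4; 21; 20]; [:: 5; 13; 6]; [:: 8; 9; 16]; [:: 11; 19; 12]; [:: 14; 22; 15]]]
  | 9 =>
    [:: [:: [:: 0; 10; 9; 23]; [:: 1; 2; 13; 14]; [:: 3; 4; 18; 17]; [:: 5; 15; 16; 6]; [:: 7; 20; 19; 8]; [:: 11; 12; 22; 21]];
     [:: [:: 0; 14; 3; 13]; [:: 1; 12; 2; 15]; [:: 4; 5; 16; 17]; [:: 6; 20; 9; 19]; [:: 7; 21; 8; 18]; [:: 10; 11; 22; 23]];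
     [:: [:: 0; 6; 12; 18]; [:: 1; 7; 13; 19]; [:: 2; 8; 14; 20]; [:: 3; 9; 15; 21]; [:: 4; 10; 16; 22]; [:: 5; 11; 17; 23]];
     [:: [:: 0; 2; 9; 5]; [:: 1; 4; 13; 16]; [:: 3; 23; 18; 20]; [:: 6; 11; 15; 8]; [:: 7; 10; 19; 22]; [:: 12; 14; 21; 17]];
     [:: [:: 0; 4; 21; 19]; [:: 1; 6; 10; 3]; [:: 2; 5; 14; 17]; [:: 7; 9; 16; 12]; [:: 8; 11; 20; 23]; [:: 13; 18; 22; 15]];
     [:: [:: 0; 9; 12; 21]; [:: 1; 5; 22; 20]; [:: 2; 4; 11; 7]; [:: 3; 6; 15; 18]; [:: 8; 10; 17; 13]; [:: 14; 16; 23; 19]];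
     [:: [:: 0; 17; 15; 20]; [:: 1; 10; 13; 22]; [:: 2; 6; 23; 21]; [:: 3; 5; 12; 8]; [:: 4; 7; 16; 19]; [:: 9; 14; 18; 11]];
     [:: [:: 0; 7; 3; 22]; [:: 1; 18; 16; 21]; [:: 2; 11; 14; 23]; [:: 4; 9; 13; 6]; [:: 5; 8; 17; 20]; [:: 10; 12; 19; 15]];
     [:: [:: 0; 3; 12; 15]; [:: 1; 8; 4; 23]; [:: 2; 19; 17; 22]; [:: 5; 7; 14; 10]; [:: 6; 21; 18; 9]; [:: 11; 16; 20; 13]];
     [:: [:: 0; 1; 11]; [:: 2; 16; 3]; [:: 4; 15; 14]; [:: 5; 19; 18]; [:: 6; 7; 17]; [:: 8; 9; 22]; [:: 10; 20; 21]; [:: 12; 13; 23]];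
     [:: [:: 0; 8; 16]; [:: 1; 9; 17]; [:: 2; 10; 18]; [:: 3; 19; 11]; [:: 4; 12; 20]; [:: 5; 13; 21]; [:: 6; 14; 22]; [:: 7; 23; 15]]]
  | 10 =>
    [:: [:: [:: 0; 1; 12; 13]; [:: 2; 3; 14; 15]; [:: 4; 5; 16; 17]; [:: 6; 7; 18; 19]; [:: 8; 9; 20; 21]; [:: 10; 11; 22; 23]];
     [:: [:: 0; 11; 12; 23]; [:: 1; 2; 13; 14]; [:: 3; 4; 15; 16]; [:: 5; 6; 17; 18]; [:: 7; 20; 19; 8]; [:: 9; 10; 21; 22]];
     [:: [:: 0; 2; 20; 3]; [:: 1; 6; 15; 5]; [:: 4; 11; 8; 10]; [:: 7; 22; 17; 21]; [:: 9; 14; 23; 13]; [:: 12; 19; 16; 18]];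
     [:: [:: 0; 14; 10; 15]; [:: 1; 3; 21; 4]; [:: 2; 7; 16; 6]; [:: 5; 12; 9; 11]; [:: 8; 23; 18; 22]; [:: 13; 20; 17; 19]];
     [:: [:: 0; 19; 23; 9]; [:: 1; 15; 11; 16]; [:: 2; 5; 22; 4]; [:: 3; 7; 17; 8]; [:: 6; 12; 10; 13]; [:: 14; 21; 18; 20]];
     [:: [:: 0; 20; 1; 10]; [:: 2; 17; 12; 16]; [:: 3; 6; 23; 5]; [:: 4; 9; 18; 8]; [:: 7; 13; 11; 14]; [:: 15; 21; 19; 22]];
     [:: [:: 0; 7; 4; 6]; [:: 1; 21; 2; 11]; [:: 3; 18; 13; 17]; [:: 5; 10; 19; 9]; [:: 8; 15; 12; 14]; [:: 16; 22; 20; 23]];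
     [:: [:: 0; 17; 23; 21]; [:: 1; 8; 5; 7]; [:: 2; 22; 3; 12]; [:: 4; 18; 14; 19]; [:: 6; 11; 20; 10]; [:: 9; 16; 13; 15]];
     [:: [:: 0; 22; 1; 18]; [:: 2; 8; 6; 9]; [:: 3; 13; 4; 23]; [:: 5; 19; 15; 20]; [:: 7; 12; 21; 11]; [:: 10; 17; 14; 16]];
     [:: [:: 0; 5; 14; 4]; [:: 1; 23; 2; 19]; [:: 3; 10; 7; 9]; [:: 6; 21; 16; 20]; [:: 8; 12; 22; 13]; [:: 11; 17; 15; 18]];
     [:: [:: 0; 8; 16]; [:: 1; 9; 17]; [:: 2; 10; 18]; [:: 3; 19; 11]; [:: 4; 12; 20]; [:: 5; 13; 21]; [:: 6; 14; 22]; [:: 7; 23; 15]]]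
  | 11 =>
    [:: [:: [:: 0; 1; 12; 13]; [:: 2; 3; 14; 15]; [:: 4; 5; 16; 17]; [:: 6; 7; 18; 19]; [:: 8; 9; 20; 21]; [:: 10; 11; 22; 23]];
     [:: [:: 0; 11; 12; 23]; [:: 1; 2; 13; 14]; [:: 3; 4; 15; 16]; [:: 5; 6; 17; 18]; [:: 7; 20; 19; 8]; [:: 9; 10; 21; 22]];
     [:: [:: 0; 2; 17; 3]; [:: 1; 11; 8; 10]; [:: 4; 6; 21; 7]; [:: 5; 15; 12; 14]; [:: 9; 19; 16; 18]; [:: 13; 23; 20; 22]];
     [:: [:: 0; 14; 23; 21]; [:: 1; 3; 18; 4]; [:: 2; 11; 9; 12]; [:: 5; 7; 22; 8]; [:: 6; 15; 13; 16]; [:: 10; 20; 17; 19]];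
     [:: [:: 0; 22; 1; 15]; [:: 2; 5; 19; 4]; [:: 3; 13; 10; 12]; [:: 6; 8; 23; 9]; [:: 7; 17; 14; 16]; [:: 11; 20; 18; 21]];
     [:: [:: 0; 10; 7; 9]; [:: 1; 23; 2; 16]; [:: 3; 6; 20; 5]; [:: 4; 14; 11; 13]; [:: 8; 18; 15; 17]; [:: 12; 22; 19; 21]];
     [:: [:: 0; 4; 12; 16]; [:: 1; 9; 13; 21]; [:: 2; 8; 14; 20]; [:: 3; 7; 15; 19]; [:: 5; 11; 17; 23]; [:: 6; 10; 18; 22]];
     [:: [:: 0; 6; 12; 18]; [:: 1; 5; 13; 17]; [:: 2; 10; 14; 22]; [:: 3; 9; 15; 21]; [:: 4; 8; 16; 20]; [:: 7; 23; 19; 11]];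
     [:: [:: 0; 8; 12; 20]; [:: 1; 7; 13; 19]; [:: 2; 6; 14; 18]; [:: 3; 11; 15; 23]; [:: 4; 10; 16; 22]; [:: 5; 9; 17; 21]];
     [:: [:: 0; 5; 12; 17]; [:: 1; 8; 13; 20]; [:: 2; 7; 14; 19]; [:: 3; 10; 15; 22]; [:: 4; 9; 16; 21]; [:: 6; 11; 18; 23]];
     [:: [:: 0; 7; 12; 19]; [:: 1; 6; 13; 18]; [:: 2; 9; 14; 21]; [:: 3; 8; 15; 20]; [:: 4; 11; 16; 23]; [:: 5; 10; 17; 22]]]
  | _ => [::]
  end.

Definition vertex_cycles (F : seq (seq (seq nat))) : seq (seq (seq vert)) :=
  map (map (map vertex)) F.

Definition certified (r : nat) : bool :=
  (size (certificate r) == 11) && HWP43_24_certb r (vertex_cycles (certificate r)).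

Lemma certificates_ok : all certified [:: 1; 3; 4; 5; 7; 8; 9; 10; 11].
Proof. by vm_compute. Qed.

Lemma HWP43_24_certified r : certified r -> HWP43_24 r (11 - r).
Proof. by case/andP=> /eqP size_F /HWP43_24_of_certb; rewrite size_map size_F. Qed.

Theorem mainTheorem8 (r s : nat) :
  0 < r -> r <> 2 -> r <> 6 -> (HWP43_24 r s <-> r + s = 11).
Proof.
move=> r_gt0 r_neq2 r_neq6; split=> [|rs11]; first exact: HWP43_24_sum.
have -> : s = 11 - r by lia.
apply/HWP43_24_certified/(allP certificates_ok).
by rewrite !inE; lia.
Qed.
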